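(* Let $n\ge 3$. Consider the $n^2$-puzzle: the $n\times n$ grid graph with $n^2$ distinct robots, one occupying each vertex. Then any two states of the $n^2$-puzzle are connected via legal moves, i.e., from any assignment of the robots to the vertices one can reach any other such assignment by a finite sequence of legal moves.
   Context: A state is a bijection between the set of robots and the vertex set of the grid. A legal move (one time step) takes a state to another state such that each robot either stays at its vertex or moves to an adjacent vertex, no two robots end at the same vertex, and no two robots traverse the same edge in opposite directions (swap). Several robots may move simultaneously; since every vertex is occupied, the moving robots move synchronously along one or more vertex-disjoint cycles of the grid. *)

From mathcomp Require Import all_boot all_fingroup.
Set Implicit Arguments. Unset Strict Implicit. Unset Printing Implicit Defensive.

Definition vert (n : nat) : finType := ('I_n * 'I_n)%type.

Definition adj (n : nat) (u v : vert n) : bool :=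
  ((u.1 == v.1) && ((u.2.+1 == v.2) || (v.2.+1 == u.2))) ||
  ((u.2 == v.2) && ((u.1.+1 == v.1) || (v.1.+1 == u.1))).

(* Robots: n^2 distinct robots; we label them by an n^2-element type,
   namely (a copy of) the vertex set. A state is a bijection robots -> vertices. *)
Definition robot (n : nat) : finType := vert n.
Definition state (n : nat) := {perm vert n}.

(* A legal move from s to t: each robot stays or moves to an adjacent vertex,
   no two robots end at the same vertex (automatic: t is a bijection), and
   no two robots swap along an edge. *)
Definition legal_move (n : nat) (s t : state n) : Prop :=
  (forall r : robot n, t r = s r \/ adj (s r) (t r)) /\
  (forall r1 r2 : robot n, r1 <> r2 -> ~ (t r1 = s r2 /\ t r2 = s r1)).

Inductive reachable (n : nat) : state n -> state n -> Prop :=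
  | reach_refl s : reachable s s
  | reach_step s t u : legal_move s t -> reachable t u -> reachable s u.

(* Call a permutation p of the vertices realizable if every state s can reach
   s * p, i.e. the configuration in which the robot at v has moved to p v;
   realizable permutations are closed under products.  Rotating the robots
   along a cycle of length at least 3 of the grid is a single legal move.  In
   a 2x3 block with rows v0 v1 v2 and v3 v4 v5, the transposition of v0 and
   v1 is the product of the rotations along the two unit squares and along
   the boundary hexagon, and when n >= 3 every edge of the grid lies in such
   a block.  As the grid is connected, the edge transpositions generate all
   transpositions, hence all permutations. *)

From mathcomp Require Import all_boot all_fingroup zify.
Set Implicit Arguments. Unset Strict Implicit. Unset Printing Implicit Defensive.

Local Open Scope group_scope.

Ltac eval_eq :=
  repeat (rewrite eqxx /= || match goal with
  | H : is_true (?a != ?b) |- context [?a == ?b] => rewrite (negbTE H) /=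
  | H : is_true (?a != ?b) |- context [?b == ?a] => rewrite [b == a]eq_sym (negbTE H) /=
  end).

Lemma next_notin (T : eqType) (c : seq T) x : x \notin c -> next c x = x.
Proof. by rewrite next_nth => /negbTE ->. Qed.

Lemma next_next_fixed (T : eqType) (c : seq T) x :
  uniq c -> 2 < size c -> next c (next c x) = x -> next c x = x.
Proof.
move=> Uc c_gt2; have [/rot_to[i [|y [|z s]] Ec] | /next_notin //] := boolP (x \in c);
  try by move: c_gt2; rewrite -(size_rot i) Ec.
have := Uc; rewrite -!(next_rot i Uc) -(rot_uniq i) Ec /= !inE !eqxx => /and3P[].
rewrite !negb_or => /and3P[_ /negP xz _] _ _.
by case: eqP => // _ zx; rewrite zx eqxx in xz.
Qed.

Section CyclePerm.
Variable T : finType.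
Implicit Types (c : seq T) (x : T).

Definition cycle_perm c : {perm T} :=
  \prod_(e <- rev (zip c (behead c))) tperm e.1 e.2.

Lemma next_at_tperm (a b x y : T) (r : seq T) : a \notin r -> b \notin r ->
  x != a -> x != b -> tperm a b (next_at x b y r) = next_at x a y r.
Proof.
move=> ar br xa xb; elim: r y ar br => [|z r IH] y /=.
  by case: ifP => _ _ _; rewrite ?tpermR ?tpermD // eq_sym.
rewrite !inE !negb_or => /andP[az ar] /andP[bz br].
by case: ifP => _; [rewrite tpermD // eq_sym | exact: IH].
Qed.

Lemma cycle_permE c : uniq c -> cycle_perm c =1 next c.
Proof.
elim: c => [|a [|b r] IH] Uc x; rewrite /cycle_perm ?big_nil ?perm1 //.
  by rewrite /next /=; case: ifP => // /eqP.
move: Uc; rewrite [uniq _]/= !inE !negb_or => /andP[/andP[ab ar] /andP[br Ur]].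
rewrite [zip _ _]/= rev_cons big_rcons permM -/(cycle_perm _) IH /=; last by rewrite br.
have [-> | xa] := eqVneq x a.
  by rewrite -/(next (b :: r) a) next_notin ?inE ?negb_or ?ab // tpermL.
have [-> | xb] := eqVneq x b.
  case: r ar br {IH Ur} => [|z r] /=; rewrite ?eqxx ?tpermR // !inE !negb_or.
  by move=> /andP[az _] /andP[bz _]; rewrite tpermD // eq_sym.
exact: next_at_tperm.
Qed.

Lemma tperm_ladder (v0 v1 v2 v3 v4 v5 : T) : uniq [:: v0; v1; v2; v3; v4; v5] ->
  tperm v0 v1 = cycle_perm [:: v0; v1; v4; v3] * cycle_perm [:: v1; v2; v5; v4]
                * cycle_perm [:: v0; v3; v4; v5; v2; v1].
Proof.
rewrite [uniq _]/= !inE !negb_or !andbT.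
move=> /and5P[/and5P[? ? ? ? ?] /and4P[? ? ? ?] /and3P[? ? ?] /andP[? ?] ?].
apply/permP => x; rewrite !permM !cycle_permE ?permE /=; try by rewrite !inE; eval_eq.
have [E|?] := eqVneq x v0; last have [E|?] := eqVneq x v1;
  last have [E|?] := eqVneq x v2; last have [E|?] := eqVneq x v3;
  last have [E|?] := eqVneq x v4; last have [E|?] := eqVneq x v5;
  by rewrite ?E; eval_eq.
Qed.

End CyclePerm.

Section TpermGeneration.
Variables (T : finType) (Q : {perm T} -> Prop).
Hypotheses (Q1 : Q 1) (QM : forall p q, Q p -> Q q -> Q (p * q)).

Lemma tperm_closed_connect (e : rel T) :
  (forall x y, e x y -> Q (tperm x y)) -> forall x y, connect e x y -> Q (tperm x y).
Proof.
move=> Qe x y /connectP[p]; elim: p x => [|z p IH] x /=; first by move=> _ ->; rewrite tperm1.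
move=> /andP[exz pz] ey; have Qz := IH z pz ey.
have [<- | zy] := eqVneq z y; first exact: Qe.
have [-> | xy] := eqVneq x y; first by rewrite tperm1.
have [-> // | xz] := eqVneq x z.
rewrite -(tpermJ_tperm zy xy) /conjg tpermV.
by rewrite [tperm z x]tpermC; have Qxz := Qe _ _ exz; apply: QM (QM Qz Qxz).
Qed.

Lemma perm_closed_tperm : (forall x y, Q (tperm x y)) -> forall p, Q p.
Proof.
move=> Qt p; have [ts -> _] := prod_tpermP p.
by elim: ts => [|t ts IH]; rewrite ?big_nil ?big_cons //; apply: QM.
Qed.

End TpermGeneration.

Section Puzzle.
Variable n : nat.
Implicit Types (s t : state n) (p q : {perm vert n}) (u v : vert n).

Lemma reachable_trans s t w : reachable s t -> reachable t w -> reachable s w.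
Proof. by elim=> // s1 s2 s3 s12 _ IH /IH; apply: reach_step. Qed.

Definition realizable p := forall s, reachable s (s * p).

Lemma realizable1 : realizable 1.
Proof. by move=> s; rewrite mulg1; apply: reach_refl. Qed.

Lemma realizableM p q : realizable p -> realizable q -> realizable (p * q).
Proof. by move=> rp rq s; rewrite mulgA; apply: reachable_trans (rp s) (rq _). Qed.

Lemma adj_sym u v : adj u v = adj v u.
Proof.
by rewrite /adj (eq_sym u.1) (eq_sym u.2) (orbC (u.2.+1 == _)) (orbC (u.1.+1 == _)).
Qed.

Lemma legal_move_mul s p :
  (forall v, p v = v \/ adj v (p v)) -> (forall v, p (p v) = v -> p v = v) ->
  legal_move s (s * p).
Proof.
move=> p_adj p_no_swap; split=> [r | r1 r2 r12 []]; rewrite !permM //.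
move=> e1 e2; apply: r12; apply: (perm_inj (s := s)).
by rewrite -e1 p_no_swap // e1 e2.
Qed.

Lemma realizable_cycle c : ucycle (@adj n) c -> 2 < size c -> realizable (cycle_perm c).
Proof.
move=> /andP[c_adj Uc] c_gt2 s; apply: reach_step (reach_refl _).
apply: legal_move_mul => [v | v]; rewrite !cycle_permE //; last exact: next_next_fixed.
have [vc | /next_notin ->] := boolP (v \in c); [right; exact: next_cycle | by left].
Qed.

Lemma realizable_ladder (v0 v1 v2 v3 v4 v5 : vert n) :
  uniq [:: v0; v1; v2; v3; v4; v5] ->
  adj v0 v1 -> adj v1 v2 -> adj v3 v4 -> adj v4 v5 ->
  adj v0 v3 -> adj v1 v4 -> adj v2 v5 -> realizable (tperm v0 v1).
Proof.
move=> U A01 A12 A34 A45 A03 A14 A25; rewrite (tperm_ladder U).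
move: U; rewrite [uniq _]/= !inE !negb_or !andbT.
move=> /and5P[/and5P[? ? ? ? ?] /and4P[? ? ? ?] /and3P[? ? ?] /andP[? ?] ?].
do 2?apply: realizableM; apply: realizable_cycle => //; rewrite /ucycle /= !inE;
  eval_eq; rewrite ?[adj v1 v0]adj_sym ?[adj v2 v1]adj_sym ?[adj v3 v0]adj_sym
    ?[adj v4 v1]adj_sym ?[adj v4 v3]adj_sym ?[adj v5 v2]adj_sym ?[adj v5 v4]adj_sym;
  by rewrite ?A01 ?A12 ?A34 ?A45 ?A03 ?A14 ?A25.
Qed.

Lemma legal_move_mulr s t (sigma : {perm vert n}) :
  {mono sigma : u v / adj u v} ->
  legal_move s t -> legal_move (s * sigma) (t * sigma).
Proof.
move=> sigma_adj [t_adj t_no_swap]; split=> [r | r1 r2 r12]; rewrite !permM.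
  by case: (t_adj r) => [-> | ?]; [left | right; rewrite sigma_adj].
by case=> /perm_inj e1 /perm_inj e2; apply: t_no_swap r12 _.
Qed.

Lemma reachable_mulr s t (sigma : {perm vert n}) :
  {mono sigma : u v / adj u v} ->
  reachable s t -> reachable (s * sigma) (t * sigma).
Proof.
move=> sigma_adj; elim=> [s' | s1 s2 s3 s12 _ IH]; first exact: reach_refl.
exact: reach_step (legal_move_mulr sigma_adj s12) IH.
Qed.

Lemma realizable_conjg p (sigma : {perm vert n}) :
  {mono sigma : u v / adj u v} ->
  realizable p -> realizable (p ^ sigma).
Proof.
move=> sigma_adj rp s; have := reachable_mulr sigma_adj (rp (s * sigma^-1)).
by rewrite mulgKV /conjg !mulgA.
Qed.

Definition transpose_grid : {perm vert n} := perm (can_inj (@swap_pairK 'I_n 'I_n)).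

Lemma adj_transpose_grid : {mono transpose_grid : u v / adj u v}.
Proof. by move=> u v; rewrite !permE /adj /= orbC. Qed.

Ltac grid_lia := rewrite /adj /= ?inE ?xpair_eqE -?val_eqE /=; lia.

Definition grid_dist u v := (u.1 - v.1) + (v.1 - u.1) + (u.2 - v.2) + (v.2 - u.2).

Lemma grid_adj_closer u v : u != v -> exists2 w, adj u w & grid_dist w v < grid_dist u v.
Proof.
case: u v => [a b] [c d]; rewrite xpair_eqE -!val_eqE /grid_dist /= => uv.
have [lt_ac | lt_ca | eq_ac] := ltngtP a c.
- by exists (Ordinal (leq_ltn_trans lt_ac (ltn_ord c)), b); grid_lia.
- by exists (Ordinal (leq_ltn_trans (leq_pred a) (ltn_ord a)), b); grid_lia.
have [lt_bd | lt_db | eq_bd] := ltngtP b d.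
- by exists (a, Ordinal (leq_ltn_trans lt_bd (ltn_ord d))); grid_lia.
- by exists (a, Ordinal (leq_ltn_trans (leq_pred b) (ltn_ord b))); grid_lia.
by move: uv; rewrite eq_ac eq_bd !eqxx.
Qed.

Lemma grid_connected u v : connect (@adj n) u v.
Proof.
have [k] := ubnP (grid_dist u v); elim: k u => // k IH u /ltnSE dist_uv.
have [-> | uv] := eqVneq u v; first exact: connect0.
have [w uw dist_wv] := grid_adj_closer uv.
exact: connect_trans (connect1 uw) (IH w (leq_trans dist_wv dist_uv)).
Qed.

Hypothesis n_gt2 : 2 < n.

(* The block uses a neighbouring row i' and extends past j' if it can, and
   before j otherwise; n > 2 guarantees that one of the two fits. *)
Lemma realizable_tperm_row (i j j' : 'I_n) :
  j.+1 = j' -> realizable (tperm (i, j) (i, j')).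
Proof.
move=> jj'; have [i' ii'] : exists i' : 'I_n, (i'.+1 == i) || (i.+1 == i').
  have [lt_in | ge_in] := ltnP i.+1 n; first by exists (Ordinal lt_in); grid_lia.
  by exists (Ordinal (leq_ltn_trans (leq_pred i) (ltn_ord i))); grid_lia.
have [lt_jn | ge_jn] := ltnP j'.+1 n.
  by apply: (@realizable_ladder _ _ (i, Ordinal lt_jn) (i', j) (i', j') (i', Ordinal lt_jn));
    grid_lia.
pose k := Ordinal (leq_ltn_trans (leq_pred j) (ltn_ord j)).
by rewrite tpermC; apply: (@realizable_ladder _ _ (i, k) (i', j') (i', j) (i', k)); grid_lia.
Qed.

Lemma realizable_tperm_adj u v : adj u v -> realizable (tperm u v).
Proof.
have row := realizable_tperm_row.
have col (i i' j : 'I_n) : i.+1 = i' -> realizable (tperm (i, j) (i', j)).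
  have -> : tperm (i, j) (i', j) = tperm (j, i) (j, i') ^ transpose_grid.
    by rewrite tpermJ !permE.
  by move=> e; apply: realizable_conjg adj_transpose_grid (row _ _ _ e).
case: u v => [i j] [i' j'] /orP[/andP[/eqP /= <-{i'}] | /andP[/eqP /= <-{j'}]] /orP[] /eqP e.
- exact: row.
- by rewrite tpermC; apply: row.
- exact: col.
- by rewrite tpermC; apply: col.
Qed.

End Puzzle.

Theorem proposition4 (n : nat) (hn : 3 <= n) (s t : state n) : reachable s t.
Proof.
have realizable_tperm (u v : vert n) : realizable (tperm u v).
  apply: (tperm_closed_connect (Q := @realizable n)) (grid_connected u v);
    [exact: realizable1 | exact: realizableM | exact: realizable_tperm_adj].
have := perm_closed_tperm (Q := @realizable n) (@realizable1 n) (@realizableM n)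
          realizable_tperm (s^-1 * t) s.
by rewrite mulKVg.
Qed.
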